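(* Let $G$ be a graph (loops and multiple edges allowed) of girth $g$. If two closed geodesics of length $g$ in $G$ share a subwalk of length $\lfloor g/2 \rfloor+1$, then they coincide.
   Context: A walk is a finite sequence of oriented edges in which the initial vertex of each edge after the first equals the terminal vertex of the previous one; it is closed if it starts and ends at the same vertex, and closed walks are considered up to cyclic permutation. A walk is geodesic if it never traverses an edge and immediately retraverses it in the opposite direction; a closed geodesic is a closed walk that is locally geodesic (including at the base point). The girth of $G$ is the smallest length of a closed geodesic in $G$. *)

From mathcomp Require Import all_boot.
Set Implicit Arguments. Unset Strict Implicit. Unset Printing Implicit Defensive.

(* A graph with loops and multiple edges allowed (Serre's convention):
   a type of vertices, a type of oriented edges, an origin map and a
   fixed-point-free involution "reverse orientation".  A (multi-)edge is a
   pair {e, rev e}; a loop is an e with origin e = terminus e. *)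
Record graph := Graph {
  vert : Type;
  oedge : Type;
  origin : oedge -> vert;
  erev : oedge -> oedge;
  erevK : forall e, erev (erev e) = e;
  erev_nofix : forall e, erev e <> e
}.

Definition terminus (G : graph) (e : oedge G) : vert G := origin (erev e).

Definition gstep (G : graph) (e e' : oedge G) : Prop :=
  terminus e = origin e' /\ e' <> erev e.

Fixpoint rchain {T : Type} (r : T -> T -> Prop) (x : T) (s : seq T) : Prop :=
  match s with
  | [::] => True
  | y :: s' => r x y /\ rchain r y s'
  end.

(* A closed geodesic: a nonempty closed walk e_0 ... e_{n-1}
   (terminus e_i = origin e_{i+1}, terminus e_{n-1} = origin e_0) with no
   backtracking, including at the base point (e_0 <> erev e_{n-1}). *)
Definition closed_geodesic (G : graph) (c : seq (oedge G)) : Prop :=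
  match c with
  | [::] => False
  | e :: s => rchain (@gstep G) e (rcons s e)
  end.

Definition is_girth (G : graph) (g : nat) : Prop :=
  (exists c : seq (oedge G), closed_geodesic c /\ size c = g) /\
  (forall c : seq (oedge G), closed_geodesic c -> g <= size c).

Definition cyc_equal (T : Type) (c c' : seq T) : Prop :=
  exists k, c' = rot k c.

Definition cyc_subwalk (T : Type) (w c : seq T) : Prop :=
  size w <= size c /\ exists k, w = take (size w) (rot k c).

From Stdlib Require Import Classical_Prop.
From mathcomp Require Import all_boot.
From mathcomp Require Import zify.

Set Implicit Arguments.
Unset Strict Implicit.
Unset Printing Implicit Defensive.

(* Rotate both closed geodesics so that they start with the common subwalk w;
   what is left of each is a non-backtracking walk p_i of length g - |w| from
   the last edge of w back to its first edge.  If p_1 <> p_2, cut off their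
   common prefix and common suffix: the two remaining pieces start with
   distinct edges at a common vertex and end with distinct edges at a common
   vertex, so one followed by the reverse of the other is a closed geodesic of
   length at most 2 (g - |w|) = 2 (ceil (g/2) - 1) < g, contradicting the
   girth.  Hence p_1 = p_2 and the two rotations coincide. *)

Section Rchain.
Variables (T : Type) (r : T -> T -> Prop).

Lemma rchain_cat x s t :
  rchain r x (s ++ t) <-> rchain r x s /\ rchain r (last x s) t.
Proof. by elim: s x => [|y s IH] x /=; [tauto | rewrite IH; tauto]. Qed.

Lemma rchain_rcons x s y :
  rchain r x (rcons s y) <-> rchain r x s /\ r (last x s) y.
Proof. by rewrite -cats1 rchain_cat /=; tauto. Qed.

Lemma rchain_map (U : Type) (r' : U -> U -> Prop) (f : T -> U) x s :
  (forall y z, r y z -> r' (f y) (f z)) -> rchain r x s -> rchain r' (f x) (map f s).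
Proof. by move=> rr'; elim: s x => //= y s IH x [/rr' ? /IH]. Qed.

End Rchain.

Lemma last_rev_belast (T : Type) (x : T) s : last (last x s) (rev (belast x s)) = x.
Proof. by rewrite -(last_cons x) -rev_rcons -lastI rev_cons last_rcons. Qed.

Lemma rchain_rev (T : Type) (r : T -> T -> Prop) x s :
  rchain r x s -> rchain (fun y z => r z y) (last x s) (rev (belast x s)).
Proof.
elim: s x => //= y s IH x [rxy /IH]; rewrite rev_cons => rev_s.
by apply/rchain_rcons; rewrite last_rev_belast.
Qed.

Section Geodesics.
Variable G : graph.
Implicit Types (a b e x y : oedge G) (s p q c : seq (oedge G)).

Lemma erev_inj : injective (@erev G).
Proof. by move=> e e' ee'; rewrite -(erevK e) -(erevK e') ee'. Qed.

Lemma gstep_rev e e' : gstep e e' -> gstep (erev e') (erev e).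
Proof.
case=> ee' not_back; split; first by rewrite /terminus !erevK -ee'.
by move=> back; apply: not_back; rewrite back erevK.
Qed.

Lemma closed_geodesic_rot1 c : closed_geodesic c -> closed_geodesic (rot 1 c).
Proof.
case: c => [|e [|f s]] // geo; rewrite rot1_cons; case: geo => ef fs.
by apply/rchain_rcons; rewrite last_rcons.
Qed.

Lemma closed_geodesic_rot k c : closed_geodesic c -> closed_geodesic (rot k c).
Proof.
move=> geo_c; rewrite rot_minn; elim: (minn k _) (geq_minr k (size c)) => [|m IH] le_m.
  by rewrite rot0.
by rewrite rotS //; apply/closed_geodesic_rot1/IH/ltnW.
Qed.

Lemma bigon_closed_geodesic a q1 b q2 :
  a <> b -> last a q1 <> last b q2 ->
  rchain (@gstep G) a q1 -> rchain (@gstep G) b q2 ->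
  origin a = origin b -> terminus (last a q1) = terminus (last b q2) ->
  closed_geodesic (a :: q1 ++ map (@erev G) (rev (b :: q2))).
Proof.
move=> ab last_ab geo1 geo2 oab tab.
have geo2r := rchain_map (fun y z => @gstep_rev z y) (rchain_rev geo2).
have turn_end : gstep (last a q1) (erev (last b q2)) by split=> // /erev_inj/esym.
have turn_start : gstep (erev b) a by split; rewrite /terminus erevK.
rewrite /= lastI rev_rcons /= rcons_cat rchain_cat /= rchain_rcons last_map.
by rewrite last_rev_belast.
Qed.

Lemma diverging_walks_closed_geodesic a b q1 q2 y :
  a <> b -> origin a = origin b -> size q1 = size q2 ->
  rchain (@gstep G) a (rcons q1 y) -> rchain (@gstep G) b (rcons q2 y) ->
  exists2 c : seq (oedge G), closed_geodesic c & size c <= (size q1 + size q2).+2.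
Proof.
move=> ab oab; elim/last_ind: q1 q2 y => [|q1 e1 IH] q2 y.
  case: q2 => // _ [[tay _] _] [[tby _] _].
  have tab : terminus a = terminus b by rewrite tay tby.
  by exists [:: a; erev b]; first exact: (@bigon_closed_geodesic a [::] b [::]).
case/lastP: q2 => [|q2 e2]; rewrite ?size_rcons // => -[size_q].
move=> /rchain_rcons[geo1 [te1 _]] /rchain_rcons[geo2 [te2 _]].
rewrite !last_rcons in te1 te2.
have [eq_e12|e12] := classic (e1 = e2).
  subst e2; have [c geo_c size_c] := IH q2 e1 size_q geo1 geo2.
  by exists c => //; lia.
exists (a :: rcons q1 e1 ++ map (@erev G) (rev (b :: rcons q2 e2))).
  by apply: bigon_closed_geodesic; rewrite ?last_rcons // te1 te2.
by rewrite /= size_cat size_map size_rev /= !size_rcons; lia.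
Qed.

Lemma distinct_walks_closed_geodesic x y p1 p2 :
  size p1 = size p2 -> p1 <> p2 ->
  rchain (@gstep G) x (rcons p1 y) -> rchain (@gstep G) x (rcons p2 y) ->
  exists2 c : seq (oedge G), closed_geodesic c & size c <= size p1 + size p2.
Proof.
elim: p1 x p2 => [|a p1 IH] x [|b p2] //= [size_p] p12 [[xa _] geo1] [[xb _] geo2].
have [eq_ab|ab] := classic (a = b).
  subst b; have [|c geo_c size_c] := IH a p2 size_p _ geo1 geo2; last first.
    by exists c => //; lia.
  by move=> eq_p; apply: p12; rewrite eq_p.
have [|c geo_c size_c] := diverging_walks_closed_geodesic ab _ size_p geo1 geo2.
  by rewrite -xa -xb.
by exists c => //; lia.
Qed.

Lemma closed_geodesic_suffix e w p :
  closed_geodesic (e :: w ++ p) -> rchain (@gstep G) (last e w) (rcons p e).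
Proof. by rewrite /= rcons_cat rchain_cat => -[]. Qed.

End Geodesics.

Lemma cyc_subwalk_rot (T : Type) (w c : seq T) :
  cyc_subwalk w c -> exists k p, rot k c = w ++ p.
Proof.
case=> _ [k def_w]; exists k, (drop (size w) (rot k c)).
by rewrite {1}def_w cat_take_drop.
Qed.

Lemma cyc_equal_rot (T : Type) k1 k2 (c1 c2 : seq T) :
  rot k1 c1 = rot k2 c2 -> cyc_equal c1 c2.
Proof.
move=> eq_rot; exists (rot_add c1 k1 (size c1 - k2)).
by rewrite -rot_rot_add -(size_rot k1) eq_rot -/(rotr k2 _) rotK.
Qed.

Theorem lemma2p1 (G : graph) (g : nat) (c1 c2 : seq (oedge G))
  (w : seq (oedge G)) :
  is_girth G g ->
  closed_geodesic c1 -> size c1 = g ->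
  closed_geodesic c2 -> size c2 = g ->
  size w = g./2 + 1 ->
  cyc_subwalk w c1 -> cyc_subwalk w c2 ->
  cyc_equal c1 c2.
Proof.
move=> [_ girth_min] geo1 size1 geo2 size2 size_w.
move=> /cyc_subwalk_rot[k1 [p1 rot1]] /cyc_subwalk_rot[k2 [p2 rot2]].
have [eq_p|p12] := classic (p1 = p2).
  by apply: (@cyc_equal_rot _ k1 k2); rewrite rot1 rot2 eq_p.
have size_p1 : size c1 = size w + size p1 by rewrite -(size_rot k1) rot1 size_cat.
have size_p2 : size c2 = size w + size p2 by rewrite -(size_rot k2) rot2 size_cat.
case: w size_w rot1 rot2 size_p1 size_p2 => [|e w]; first by rewrite addn1.
move=> /= size_w rot1 rot2 size_p1 size_p2.
have := closed_geodesic_rot k1 geo1; rewrite rot1 => /closed_geodesic_suffix walk1.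
have := closed_geodesic_rot k2 geo2; rewrite rot2 => /closed_geodesic_suffix walk2.
have [|c geo_c size_c] := distinct_walks_closed_geodesic _ p12 walk1 walk2; first lia.
have := girth_min c geo_c; lia.
Qed.
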